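(* Let $\mathbf v_1,\dots,\mathbf v_k\in\mathbb R^d$ be unit vectors with $\mathbf v_i^T\mathbf v_j=\beta$ for all $i\neq j$, where $\beta\in[0,1]$. Then $\bar{\mathbf w}=\frac{\sum_{j=1}^k\mathbf v_j}{\|\sum_{j=1}^k\mathbf v_j\|_2}$ is a fixed point of the ODE $\frac{d}{dt}\mathbf w=-(I_d-\mathbf w\mathbf w^T)\nabla L(\mathbf w)$, i.e. $(I_d-\bar{\mathbf w}\bar{\mathbf w}^T)\nabla L(\bar{\mathbf w})=0$.
   Context: Let $h_p$ be the probabilist's Hermite polynomials normalized to be orthonormal in $L^2$ of the standard Gaussian measure. Let $\sigma=\sum_{p\ge1}a_ph_p$, $\sigma^*=\sum_{p\ge1}b_ph_p$ be square integrable w.r.t. the standard Gaussian, $p^*=\min\{p:b_p\neq0\}$, $c_p=a_pb_p$, with $c_p\ge0$ for $p\ge p^*$, $c_{p^*}>0$ and the relevant series converging. The loss is $L(\mathbf w)=C-\mathbb E_{\mathbf x\sim\mathcal N(0,I_d)}\big[\sigma(\mathbf w^T\mathbf x)\sum_{j=1}^k\sigma^*(\mathbf v_j^T\mathbf x)\big]$, which for unit $\mathbf w$ equals $C-\sum_{p\ge p^*}c_p\sum_j(\mathbf v_j^T\mathbf w)^p$; this formula defines $L$ and its Euclidean gradient $\nabla L$ on $\mathbb R^d$. *)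

From HB Require Import structures.
From mathcomp Require Import all_boot all_order all_algebra.
From mathcomp Require Import all_classical all_reals all_analysis.
Set Implicit Arguments. Unset Strict Implicit. Unset Printing Implicit Defensive.
Import Order.TTheory GRing.Theory Num.Theory numFieldNormedType.Exports.
Local Open Scope ring_scope.

Definition dotv {R : realType} {d : nat} (u v : 'cV[R]_d) : R := (u^T *m v) 0 0.
Definition normv {R : realType} {d : nat} (u : 'cV[R]_d) : R := Num.sqrt (dotv u u).

(* The loss, for unit w:  L(w) = C - sum_{p} c_p sum_j (v_j^T w)^p
   (c p = a_p b_p, which vanishes for p < pstar). *)
Definition lossL {R : realType} {d k : nat} (C : R) (c : nat -> R)
  (v : 'I_k -> 'cV[R]_d) (w : 'cV[R]_d) : R :=
  C - limn (series (fun p => c p * \sum_(j < k) (dotv (v j) w) ^+ p)).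

(* p-th term of the i-th coordinate of the Euclidean gradient of the formula
   above:  - p c_p sum_j (v_j^T w)^(p-1) (v_j)_i  (the p = 0 term is 0). *)
Definition grad_term {R : realType} {d k : nat} (c : nat -> R)
  (v : 'I_k -> 'cV[R]_d) (w : 'cV[R]_d) (i : 'I_d) (p : nat) : R :=
  - (p%:R * c p * \sum_(j < k) (dotv (v j) w) ^+ p.-1 * v j i 0).

Definition gradL {R : realType} {d k : nat} (c : nat -> R)
  (v : 'I_k -> 'cV[R]_d) (w : 'cV[R]_d) : 'cV[R]_d :=
  \col_i limn (series (grad_term c v w i)).

From HB Require Import structures.
From mathcomp Require Import all_boot all_order all_algebra.
From mathcomp Require Import all_classical all_reals all_analysis.
Import Order.TTheory GRing.Theory Num.Theory numFieldNormedType.Exports.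
Local Open Scope ring_scope.
Set Implicit Arguments. Unset Strict Implicit.

(* All v_j have the same inner product 1 + (k-1) beta with their sum s, hence
   the same inner product a with wbar = s / |s|.  Every term of the gradient
   series at wbar is then a multiple of s, so nabla L(wbar) is parallel to
   wbar and is killed by the projection I - wbar wbar^T. *)

Section DotProduct.
Variables (R : realType) (d : nat).
Implicit Types u w : 'cV[R]_d.

Lemma dotvE u w : dotv u w = \sum_i u i 0 * w i 0.
Proof. by rewrite /dotv mxE; apply: eq_bigr => i _; rewrite mxE. Qed.

Lemma dotvC u w : dotv u w = dotv w u.
Proof. by rewrite !dotvE; apply: eq_bigr => i _; rewrite mulrC. Qed.

Lemma dotvZr u w a : dotv u (a *: w) = a * dotv u w.
Proof. by rewrite !dotvE mulr_sumr; apply: eq_bigr => i _; rewrite mxE mulrCA. Qed.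

Lemma dotvZl u w a : dotv (a *: u) w = a * dotv u w.
Proof. by rewrite dotvC dotvZr dotvC. Qed.

Lemma dotv_sumr k u (f : 'I_k -> 'cV[R]_d) :
  dotv u (\sum_j f j) = \sum_j dotv u (f j).
Proof.
rewrite dotvE; under eq_bigr do rewrite summxE mulr_sumr.
by rewrite exchange_big /=; apply: eq_bigr => j _; rewrite dotvE.
Qed.

Lemma dotvv_ge0 u : 0 <= dotv u u.
Proof. by rewrite dotvE; apply: sumr_ge0 => i _; rewrite -expr2 sqr_ge0. Qed.

Lemma dotvv_eq0 u : dotv u u = 0 -> u = 0.
Proof.
rewrite dotvE => uu0; apply/matrixP => i j; rewrite ord1 mxE.
have terms_ge0 (l : 'I_d) : xpredT l -> 0 <= u l 0 * u l 0.
  by move=> _; rewrite -expr2 sqr_ge0.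
have /eqP := @psumr_eq0P _ _ xpredT _ terms_ge0 uu0 i isT.
by rewrite mulf_eq0 orbb => /eqP.
Qed.

Lemma sqr_normv u : normv u ^+ 2 = dotv u u.
Proof. exact/sqr_sqrtr/dotvv_ge0. Qed.

Lemma normv_gt0 u : u != 0 -> 0 < normv u.
Proof.
move=> u_neq0; rewrite sqrtr_gt0 lt_def dotvv_ge0 andbT.
by apply: contra_neq u_neq0 => /dotvv_eq0.
Qed.

Lemma normvZ a u : normv (a *: u) = `|a| * normv u.
Proof. by rewrite /normv dotvZl dotvZr mulrA -expr2 sqrtrM ?sqr_ge0 // sqrtr_sqr. Qed.

Lemma normv_normalize u : u != 0 -> normv ((normv u)^-1 *: u) = 1.
Proof.
move=> /normv_gt0 u_gt0.
by rewrite normvZ ger0_norm ?invr_ge0 ?ltW // mulVf // gt_eqF.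
Qed.

Lemma orth_proj_unitZ w a :
  normv w = 1 -> (1%:M - w *m w^T) *m (a *: w) = 0.
Proof.
move=> w1; have ww1 : dotv w w = 1 by rewrite -sqr_normv w1 expr1n.
rewrite mulmxBl mul1mx -mulmxA -scalemxAr [w^T *m w]mx11_scalar.
by rewrite -[_ 0 0]/(dotv w w) ww1 -scalemxAr mulmx1 subrr.
Qed.

End DotProduct.

(* Unlike [lim_seriesZ], convergence of [series f] is not assumed: it follows
   when x != 0, and [limn] of a divergent series is a junk value otherwise. *)
Lemma lim_seriesZ_cvg (R : realType) (f : R ^nat) (x : R) :
  cvgn (series (x *: f)) -> limn (series (x *: f)) = x * limn (series f).
Proof.
move=> cvg_xf; have [->|x_neq0] := eqVneq x 0.
  by rewrite seriesZ !scale0r mul0r; exact: lim_cst.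
have cvg_f : cvgn (series f).
  by rewrite -[f](scalerK x_neq0); exact: is_cvg_seriesZ.
by rewrite lim_seriesZ.
Qed.

Section EquiangularGradient.
Variables (R : realType) (d k : nat) (c : nat -> R) (v : 'I_k -> 'cV[R]_d).

Definition grad_coef (a : R) : R ^nat := fun p => - (p%:R * c p * a ^+ p.-1).

Lemma dotv_sum_equiangular (beta : R) j :
  (forall j, normv (v j) = 1) ->
  (forall i j, i != j -> dotv (v i) (v j) = beta) ->
  dotv (v j) (\sum_i v i) = 1 + beta *+ k.-1.
Proof.
move=> unit_v equi; rewrite dotv_sumr (bigD1 j) //= -sqr_normv unit_v expr1n.
rewrite (eq_bigr (fun=> beta)) => [|i ij]; last by rewrite dotvC equi.
by rewrite sumr_const cardC1 card_ord.
Qed.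

Variables (w : 'cV[R]_d) (a : R).
Hypothesis dot_vw : forall j, dotv (v j) w = a.

Lemma grad_term_equiangular i :
  grad_term c v w i = (\sum_j v j) i 0 *: grad_coef a.
Proof.
apply: funext => p; rewrite /grad_term /grad_coef.
under eq_bigr do rewrite dot_vw.
rewrite -mulr_sumr summxE scalrfctE scalerN -[_ *: _]/(_ * _).
by rewrite [in RHS]mulrC !mulrA.
Qed.

Lemma gradL_equiangular :
  (forall i, cvgn (series (grad_term c v w i))) ->
  gradL c v w = limn (series (grad_coef a)) *: \sum_j v j.
Proof.
move=> cvg_grad; apply/matrixP => i j; rewrite ord1 !mxE.
have := cvg_grad i; rewrite grad_term_equiangular => /lim_seriesZ_cvg ->.
by rewrite mulrC.
Qed.

End EquiangularGradient.

Theorem lemma2 (R : realType) (d k : nat) (c : nat -> R) (pstar : nat)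
  (v : 'I_k -> 'cV[R]_d) (beta : R) :
  (1 <= pstar)%N ->
  (forall p, (p < pstar)%N -> c p = 0) ->
  (forall p, (pstar <= p)%N -> 0 <= c p) ->
  0 < c pstar ->
  (forall w : 'cV[R]_d, normv w = 1 -> forall i, cvgn (series (grad_term c v w i))) ->
  (forall j, normv (v j) = 1) ->
  (forall i j, i != j -> dotv (v i) (v j) = beta) ->
  0 <= beta <= 1 ->
  let wbar := (normv (\sum_(j < k) v j))^-1 *: (\sum_(j < k) v j) in
  (1%:M - wbar *m wbar^T) *m gradL c v wbar = 0.
Proof.
move=> _ _ _ _ cvg_grad unit_v equi _ wbar; set s := \sum_(j < k) v j.
have dot_vw j : dotv (v j) wbar = (normv s)^-1 * (1 + beta *+ k.-1).
  by rewrite dotvZr (dotv_sum_equiangular _ unit_v equi).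
have cvg_grad_wbar i : cvgn (series (grad_term c v wbar i)).
  have [s0|s_neq0] := eqVneq s 0; last exact/cvg_grad/normv_normalize.
  rewrite (grad_term_equiangular c dot_vw) -/s s0 mxE seriesZ scale0r.
  exact: (is_cvg_cst (0 : R)).
rewrite (gradL_equiangular dot_vw cvg_grad_wbar) -/s; set G := limn _.
have [->|s_neq0] := eqVneq s 0; first by rewrite scaler0 mulmx0.
have -> : G *: s = (G * normv s) *: wbar.
  by rewrite /wbar scalerA mulfK // gt_eqF // normv_gt0.
exact/orth_proj_unitZ/normv_normalize.
Qed.
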